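(* Let $\phi:[1]^m\to[1]^n$ be a surjective $\boxplus$-morphism and $\delta:[1]\to[1]^n$ an injective $\boxplus$-morphism. Then there exists a $\boxplus$-morphism $\delta^*:[1]\to[1]^m$ with $\phi\circ\delta^*=\delta$.
   Context: $[1]=\{0<1\}$, $[1]^n$ the product poset ($[1]^0=[0]$). An interval in a poset is a non-empty subset $[x,z]=\{y:x\leq y\leq z\}$. $\boxplus$ is the category whose objects are the $[1]^n$ ($n\geq0$) and whose morphisms are the monotone functions mapping every interval onto an interval. *)

From mathcomp Require Import all_boot.
Set Implicit Arguments. Unset Strict Implicit. Unset Printing Implicit Defensive.

(* The poset [1]^n = {0<1}^n, as functions 'I_n -> bool with the product order.
   [1]^0 has a unique element; [1] is cube 1. *)
Definition cube (n : nat) := {ffun 'I_n -> bool}.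

Definition cle (n : nat) (x y : cube n) : bool := [forall i, x i ==> y i].

Definition in_interval (n : nat) (x z y : cube n) : Prop := cle x y /\ cle y z.

Definition monotone (m n : nat) (f : cube m -> cube n) : Prop :=
  forall x y, cle x y -> cle (f x) (f y).

Definition box_mor (m n : nat) (f : cube m -> cube n) : Prop :=
  monotone f /\
  forall x z : cube m, cle x z ->
    exists a b : cube n, cle a b /\
      forall y : cube n,
        (exists w : cube m, in_interval x z w /\ f w = y) <-> in_interval a b y.

From mathcomp Require Import all_boot.
Set Implicit Arguments. Unset Strict Implicit. Unset Printing Implicit Defensive.

(* Since delta is injective and its image is an interval, delta maps [1] onto an
   edge a < a + e_i of [1]^n. By surjectivity pick x over a and x' over a + e_i;
   the image of the interval [x, x v x'] is an interval with bottom <= a and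
   top >= a + e_i, so a + e_i = phi w for some w >= x. Walking from w down to x
   one coordinate at a time, phi stays in the two-point interval [a, a + e_i]
   and must jump along some edge y < y + e_j; that edge is the required lift. *)

Lemma cleP n (x y : cube n) : reflect (forall j, x j -> y j) (cle x y).
Proof.
by apply: (iffP forallP) => H j; [apply/implyP | apply/implyP => /H].
Qed.

Arguments cleP {n x y}.

Section CubeOrder.

Variable n : nat.
Implicit Types x y z u v : cube n.

Lemma cle_refl x : cle x x.
Proof. exact/cleP. Qed.

Lemma cle_trans x y z : cle x y -> cle y z -> cle x z.
Proof. by move=> /cleP xy /cleP yz; apply/cleP => j /xy /yz. Qed.

Lemma cle_anti x y : cle x y -> cle y x -> x = y.
Proof.
move=> /cleP xy /cleP yx; apply/ffunP => j.
by apply/idP/idP => [/xy | /yx].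
Qed.

Lemma in_interval_left x z : cle x z -> in_interval x z x.
Proof. by split; rewrite ?cle_refl. Qed.

Lemma in_interval_right x z : cle x z -> in_interval x z z.
Proof. by split; rewrite ?cle_refl. Qed.

Lemma cle_neq_coord x y : cle x y -> x != y -> exists2 j, x j = false & y j.
Proof.
move=> xy; have [/existsP [j /andP [/negbTE xj yj]] _ | no_j] :=
  boolP [exists j, ~~ x j && y j]; first by exists j.
move=> xny; suff: x == y by rewrite (negbTE xny).
apply/eqP/cle_anti => //; apply/cleP => j yj.
by apply: contraNT no_j => xj; apply/existsP; exists j; rewrite xj.
Qed.

Lemma cle_card x y : cle x y -> x != y -> #|[set j | x j]| < #|[set j | y j]|.
Proof.
move=> xy /(cle_neq_coord xy) [j xj yj]; apply/proper_card/properP; split.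
  by apply/subsetP => l; rewrite !inE; apply/cleP.
by exists j; rewrite !inE ?xj.
Qed.

Definition cube_join x y : cube n := [ffun j => x j || y j].

Lemma cle_joinl x y : cle x (cube_join x y).
Proof. by apply/cleP => j; rewrite ffunE => ->. Qed.

Lemma cle_joinr x y : cle y (cube_join x y).
Proof. by apply/cleP => j; rewrite ffunE orbC => ->. Qed.

Definition cube_set y (i : 'I_n) : cube n := [ffun j => (j == i) || y j].

Definition cube_clear y (i : 'I_n) : cube n := [ffun j => (j != i) && y j].

Lemma cube_set_coord y i : cube_set y i i.
Proof. by rewrite ffunE eqxx. Qed.

Lemma cube_set_neq y i : y i = false -> cube_set y i != y.
Proof. by move=> yi; apply/eqP => /ffunP /(_ i); rewrite cube_set_coord yi. Qed.

Lemma cle_cube_set y i : cle y (cube_set y i).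
Proof. by apply/cleP => j; rewrite ffunE orbC => ->. Qed.

Lemma cube_set_clear y i : y i -> cube_set (cube_clear y i) i = y.
Proof.
by move=> yi; apply/ffunP => j; rewrite !ffunE; case: eqVneq => [->|].
Qed.

Lemma cube_clear_coord y i : cube_clear y i i = false.
Proof. by rewrite ffunE eqxx. Qed.

Lemma cle_cube_clear x y i : x i = false -> cle x y -> cle x (cube_clear y i).
Proof.
move=> xi /cleP xy; apply/cleP => j xj; rewrite ffunE xy // andbT.
by apply: contraTneq xj => ->; rewrite xi.
Qed.

Lemma cube_set_cover y i v :
  y i = false -> cle y v -> cle v (cube_set y i) -> v = y \/ v = cube_set y i.
Proof.
move=> yi /cleP yv /cleP vy; case vi: (v i); [right | left];
  apply/ffunP => j; rewrite ?ffunE; case: (eqVneq j i) => [-> | ne] /=;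
  rewrite ?vi ?yi //; apply/idP/idP => [/vy | /yv] //;
  by rewrite ffunE (negbTE ne).
Qed.

Lemma cube_set_cover_strict y i u v : y i = false ->
  cle y u -> cle u v -> cle v (cube_set y i) -> u != v ->
  u = y /\ v = cube_set y i.
Proof.
move=> yi yu uv vy; have yv := cle_trans yu uv; have uy := cle_trans uv vy.
have [-> | eu] := cube_set_cover yi yu uy.
  by case: (cube_set_cover yi yv vy) => -> //; rewrite eqxx.
move: uv; rewrite eu => /(cle_anti vy) <-; by rewrite eqxx.
Qed.

End CubeOrder.

Lemma exists_jump_edge m (T : eqType) (f : cube m -> T) x w :
  cle x w -> f x != f w ->
  exists (y : cube m) (j : 'I_m), [/\ y j = false, cle x y, cle (cube_set y j) w
                & f y != f (cube_set y j)].
Proof.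
have [k] := ubnP #|[set l | w l]|; elim: k w => // k IH w wk xw fxw.
have [j xj wj] : exists2 j, x j = false & w j.
  by apply: cle_neq_coord xw _; apply: contraNneq fxw => ->.
set y := cube_clear w j.
have yj : y j = false := cube_clear_coord w j.
have ywj : cube_set y j = w := cube_set_clear wj.
have xy : cle x y := cle_cube_clear xj xw.
have [fyw | fyw] := eqVneq (f y) (f w); last first.
  by exists y, j; rewrite ywj cle_refl.
have fxy : f x != f y by rewrite fyw.
have yw : cle y w by rewrite -ywj cle_cube_set.
have [|z [l [zl xz zly jump]]] := IH y _ xy fxy.
  rewrite -ltnS (leq_trans _ wk) // ltnS cle_card //.
  by rewrite -ywj eq_sym cube_set_neq.
by exists z, l; split => //; apply: cle_trans yw.
Qed.

Lemma box_mor_between m n (f : cube m -> cube n) x z v :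
  box_mor f -> cle x z -> cle (f x) v -> cle v (f z) ->
  exists2 w, in_interval x z w & f w = v.
Proof.
move=> [_ f_img] xz fxv vfz; have [c [d [_ img]]] := f_img x z xz.
have [cfx _] : in_interval c d (f x).
  by apply/img; exists x; split; first exact: in_interval_left.
have [_ fzd] : in_interval c d (f z).
  by apply/img; exists z; split; first exact: in_interval_right.
have [w [xwz <-]] : exists w, in_interval x z w /\ f w = v.
  by apply/img; split; [apply: cle_trans fxv | apply: cle_trans fzd].
by exists w.
Qed.

Definition bot1 : cube 1 := [ffun => false].
Definition top1 : cube 1 := [ffun => true].

Lemma cube1_cases (u : cube 1) : u = bot1 \/ u = top1.
Proof.
by case u0: (u ord0); [right | left]; apply/ffunP => j; rewrite ffunE (ord1 j).
Qed.

Lemma cle_bot1_top1 : cle bot1 top1.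
Proof. by apply/cleP => j; rewrite ffunE. Qed.

Lemma cle_cube1 (u v : cube 1) : cle u v -> u = v \/ (u = bot1 /\ v = top1).
Proof.
case: (cube1_cases u) => ->; case: (cube1_cases v) => ->;
  [by left | by right | | by left].
by move/cleP/(_ ord0); rewrite !ffunE => /(_ isT).
Qed.

Lemma in_interval_cube1 (u v w : cube 1) : in_interval u v w -> w = u \/ w = v.
Proof.
move=> [/cle_cube1 [-> | [_ ->]]]; first by left.
by move/cle_cube1 => [-> | [/ffunP/(_ ord0)]]; [right | rewrite !ffunE].
Qed.

Lemma box_mor_cube1 n (f : cube 1 -> cube n) : monotone f ->
  (forall t, in_interval (f bot1) (f top1) t -> t = f bot1 \/ t = f top1) ->
  box_mor f.
Proof.
move=> f_mono f_edge; split => // u v uv; exists (f u), (f v).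
split; first exact: f_mono.
move=> t; split.
  move=> [w [/in_interval_cube1 [] -> <-]]; split; rewrite ?cle_refl //; exact: f_mono.
case: (cle_cube1 uv) => [<- | [-> ->]] [ft tf].
  by exists u; split; [exact/in_interval_left/cle_refl | apply: cle_anti].
case/f_edge: (conj ft tf) => ->.
  by exists bot1; split; first exact: in_interval_left cle_bot1_top1.
by exists top1; split; first exact: in_interval_right cle_bot1_top1.
Qed.

Lemma box_mor_injective_edge n (f : cube 1 -> cube n) :
  box_mor f -> injective f ->
  exists2 i, f bot1 i = false & f top1 = cube_set (f bot1) i.
Proof.
move=> f_box f_inj; have ab := f_box.1 _ _ cle_bot1_top1.
have [|i ai bi] := cle_neq_coord ab.
  by apply/eqP => /f_inj/ffunP/(_ ord0); rewrite !ffunE.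
exists i => //.
have aib : cle (cube_set (f bot1) i) (f top1).
  by apply/cleP => j; rewrite ffunE => /orP [/eqP -> | /(cleP ab)].
have [w /in_interval_cube1 [] -> // faw] :=
  box_mor_between f_box cle_bot1_top1 (cle_cube_set _ i) aib.
by move: (cube_set_neq ai); rewrite -faw eqxx.
Qed.

Definition edge_map m (y : cube m) (j : 'I_m) (u : cube 1) : cube m :=
  if u ord0 then cube_set y j else y.

Lemma edge_map_box_mor m (y : cube m) j : y j = false -> box_mor (edge_map y j).
Proof.
move=> yj; apply: box_mor_cube1; last by rewrite /edge_map !ffunE => t [];
  exact: cube_set_cover.
move=> u v /cle_cube1 [-> | [-> ->]]; first exact: cle_refl.
by rewrite /edge_map !ffunE cle_cube_set.
Qed.

Theorem mainTheorem8 (m n : nat) (phi : cube m -> cube n) (delta : cube 1 -> cube n) :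
  box_mor phi -> (forall y : cube n, exists x : cube m, phi x = y) ->
  box_mor delta -> injective delta ->
  exists delta_star : cube 1 -> cube m,
    box_mor delta_star /\ (forall x : cube 1, phi (delta_star x) = delta x).
Proof.
move=> phi_box phi_surj delta_box delta_inj.
have [i ai delta_top] := box_mor_injective_edge delta_box delta_inj.
have [x phix] := phi_surj (delta bot1).
have [x' phix'] := phi_surj (delta top1).
have [w [xw _] phiw] : exists2 w, in_interval x (cube_join x x') w
                                    & phi w = delta top1.
  apply: box_mor_between (cle_joinl x x') _ _ => //.
    by rewrite phix delta_top cle_cube_set.
  by rewrite -phix'; apply: phi_box.1; apply: cle_joinr.
have [|y [j [yj xy yjw jump]]] := exists_jump_edge xw (f := phi).
  by rewrite phix phiw delta_top eq_sym cube_set_neq.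
have [phiy phiyj] : phi y = delta bot1 /\ phi (cube_set y j) = delta top1.
  rewrite delta_top; apply: cube_set_cover_strict jump => //.
  - by rewrite -phix; apply: phi_box.1.
  - by apply: phi_box.1; apply: cle_cube_set.
  - by rewrite -delta_top -phiw; apply: phi_box.1.
exists (edge_map y j); split; first exact: edge_map_box_mor.
by move=> u; case: (cube1_cases u) => ->; rewrite /edge_map ffunE.
Qed.
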